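(* Let $H$ be a monoid satisfying the ascending chain condition on principal ideals. Then the following hold: $1r\Rightarrow 0r$, $2r\Rightarrow 1r$, $2r\Leftrightarrow 3r$, $3r\Leftrightarrow 6r$, $6r\Leftrightarrow 5r$, $5r\Rightarrow 4r$, $5r\Rightarrow 5'r$, $4r\Rightarrow 4'r$, $1r\Rightarrow 1s$, $2r\Rightarrow 2s$, $5r\Rightarrow 5s$, $4r\Rightarrow 4s$, $2s\Rightarrow 5s$, $5's\Rightarrow 2s$.
   Context: A monoid means a commutative cancellative monoid (written multiplicatively); $H^{\ast}$ is its unit group, $\mathbb{N}=\{1,2,\dots\}$, $\mathbb{N}_0=\{0,1,2,\dots\}$. ACCP: every ascending chain of principal ideals of $H$ stabilizes. Elements are relatively prime ($a\perp b$) if all their common divisors are units. $\mathrm{Sqf}\,H$: elements not of the form $b^2c$ with $b\notin H^{\ast}$. $\mathrm{Gpr}\,H$: elements $r$ such that $r\mid b^n$ ($n\in\mathbb{N}$) implies $r\mid b$. Let $S$ stand for $\mathrm{Sqf}\,H$ (suffix s) or $\mathrm{Gpr}\,H$ (suffix r). For every $a\in H$: (0) there are $n\in\mathbb{N}$, $s_1,\dots,s_n\in S$ with $a=s_1\cdots s_n$; (1) there are $n\in\mathbb{N}$, $s_1,\dots,s_n\in S$ with $s_i\perp s_j$ for $i\ne j$ and $a=s_1s_2^2\cdots s_n^n$; (2) there are $n\in\mathbb{N}$, $s_1,\dots,s_n\in S$ with $s_i\mid s_{i+1}$ ($i<n$) and $a=s_1\cdots s_n$; (3) there are $n\in\mathbb{N}_0$,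 $s_0,\dots,s_n\in S$ with $a=s_0s_1^2s_2^{2^2}\cdots s_n^{2^n}$; (4) there are $b\in H$, $c\in S$ with $b\perp c$, $a=bc$, and some $d\in S$ with $d^2\mid b$ and $b\mid d^n$ for some $n\in\mathbb{N}$; (4') there are $b\in H$, $c\in S$ with $b\perp c$, $a=bc$, and for every $d\in S$, $d\mid b$ implies $d^2\mid b$; (5) there are $b\in H$, $c\in S$ with $a=bc$ and $a\mid c^n$ for some $n\in\mathbb{N}$; (5') there are $b\in H$, $c\in S$ with $a=bc$ and for every $d\in S$, $d\mid a$ implies $d\mid c$; (6) there are $b\in H$, $c\in S$ with $a=b^2c$. Condition $ks$ (resp. $kr$) is $(k)$ with $S=\mathrm{Sqf}\,H$ (resp. $S=\mathrm{Gpr}\,H$). *)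

From Stdlib Require Import Arith.

Record CCMonoid := {
  mcar :> Type;
  mmul : mcar -> mcar -> mcar;
  mone : mcar;
  mmulA : forall x y z, mmul x (mmul y z) = mmul (mmul x y) z;
  mmulC : forall x y, mmul x y = mmul y x;
  mmul1 : forall x, mmul mone x = x;
  mcancel : forall a b c, mmul a b = mmul a c -> b = c
}.

Arguments mmul {_} _ _.
Arguments mone {_}.

Section Defs.
Variable H : CCMonoid.

Definition unit (u : H) : Prop := exists v : H, mmul u v = mone.
Definition dvd (a b : H) : Prop := exists c : H, b = mmul a c.

Fixpoint pw (x : H) (n : nat) : H :=
  match n with 0 => mone | S k => mmul (pw x k) x end.

Fixpoint prod1n (f : nat -> H) (n : nat) : H :=
  match n with 0 => mone | S k => mmul (prod1n f k) (f (S k)) end.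

Definition ACCP : Prop :=
  forall f : nat -> H, (forall n, dvd (f (S n)) (f n)) ->
    exists N, forall n, N <= n -> dvd (f N) (f n).

Definition relprime (a b : H) : Prop :=
  forall d, dvd d a -> dvd d b -> unit d.

Definition Sqf (s : H) : Prop :=
  ~ exists b c : H, ~ unit b /\ s = mmul (pw b 2) c.

Definition Gpr (r : H) : Prop :=
  forall (b : H) (n : nat), 1 <= n -> dvd r (pw b n) -> dvd r b.

Variable P : H -> Prop.

Definition cond0 (a : H) : Prop :=
  exists (n : nat) (s : nat -> H), 1 <= n /\
    (forall i, 1 <= i <= n -> P (s i)) /\ a = prod1n s n.

Definition cond1 (a : H) : Prop :=
  exists (n : nat) (s : nat -> H), 1 <= n /\
    (forall i, 1 <= i <= n -> P (s i)) /\
    (forall i j, 1 <= i <= n -> 1 <= j <= n -> i <> j -> relprime (s i) (s j)) /\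
    a = prod1n (fun i => pw (s i) i) n.

Definition cond2 (a : H) : Prop :=
  exists (n : nat) (s : nat -> H), 1 <= n /\
    (forall i, 1 <= i <= n -> P (s i)) /\
    (forall i, 1 <= i < n -> dvd (s i) (s (S i))) /\
    a = prod1n s n.

Definition cond3 (a : H) : Prop :=
  exists (n : nat) (s : nat -> H),
    (forall i, 0 <= i <= n -> P (s i)) /\
    a = mmul (s 0) (prod1n (fun i => pw (s i) (2 ^ i)) n).

Definition cond4 (a : H) : Prop :=
  exists b c : H, P c /\ relprime b c /\ a = mmul b c /\
    exists d : H, P d /\ dvd (pw d 2) b /\ exists n, 1 <= n /\ dvd b (pw d n).

Definition cond4' (a : H) : Prop :=
  exists b c : H, P c /\ relprime b c /\ a = mmul b c /\
    forall d : H, P d -> dvd d b -> dvd (pw d 2) b.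

Definition cond5 (a : H) : Prop :=
  exists b c : H, P c /\ a = mmul b c /\ exists n, 1 <= n /\ dvd a (pw c n).

Definition cond5' (a : H) : Prop :=
  exists b c : H, P c /\ a = mmul b c /\
    forall d : H, P d -> dvd d a -> dvd d c.

Definition cond6 (a : H) : Prop :=
  exists b c : H, P c /\ a = mmul (pw b 2) c.

End Defs.

Arguments unit {H}. Arguments dvd {H}. Arguments pw {H}. Arguments prod1n {H}.
Arguments relprime {H}. Arguments Sqf {H}. Arguments Gpr {H}.

Definition holds (H : CCMonoid) (c : forall H : CCMonoid, (H -> Prop) -> H -> Prop)
  (S : H -> Prop) : Prop := forall a : H, c H S a.

(* ACCP makes proper divisibility well founded, so the implications that have to
   build a decomposition (5r => 2r, 6r => 3r, 6r => 5r, 5's => 2s) go by induction: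
   split [a = b c] (or [a = b^2 c]) with [c] in S and recurse into the proper divisor
   [b].  The other directions rest on two facts: a nonunit [d] never has [d^2]
   dividing a general prime, and a chain [s_1 | ... | s_n] rewrites as
   [u_1 u_2^2 ... u_n^n] with [u_1 ... u_n = s_n], so the layers [u_i], their pairwise
   common divisors and the non-square part of [a] are all controlled by the top
   element [s_n]. *)

From Stdlib Require Import Arith Lia Classical IndefiniteDescription.

Local Infix "**" := mmul (at level 40, left associativity).
Arguments mmulA {_}. Arguments mmulC {_}. Arguments mmul1 {_}. Arguments mcancel {_}.

Section Monoid.
Context {H : CCMonoid}.
Implicit Types a b c d e f g r u x y : H.

Lemma mmul_1_r x : x ** mone = x.
Proof. rewrite mmulC; apply mmul1. Qed.

Lemma mmul_shuffle0 x y z : x ** y ** z = x ** z ** y.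
Proof. rewrite <- !mmulA, (mmulC y); reflexivity. Qed.

Lemma mmul_shuffle1 a b c d : a ** b ** (c ** d) = a ** c ** (b ** d).
Proof. rewrite !mmulA; f_equal; apply mmul_shuffle0. Qed.

Lemma dvd_refl x : dvd x x.
Proof. exists mone; now rewrite mmul_1_r. Qed.

Lemma dvd_trans x y z : dvd x y -> dvd y z -> dvd x z.
Proof. intros [a ->] [b ->]; exists (a ** b); now rewrite mmulA. Qed.

Lemma dvd_1_l x : dvd mone x.
Proof. exists x; now rewrite mmul1. Qed.

Lemma dvd_factor_l x y : dvd x (x ** y).
Proof. now exists y. Qed.

Lemma dvd_factor_r x y : dvd y (x ** y).
Proof. exists x; apply mmulC. Qed.

Lemma dvd_mul_l a b c : dvd a b -> dvd a (b ** c).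
Proof. intros [x ->]; exists (x ** c); now rewrite mmulA. Qed.

Lemma mul_dvd_mono a b c d : dvd a b -> dvd c d -> dvd (a ** c) (b ** d).
Proof. intros [x ->] [y ->]; exists (x ** y); apply mmul_shuffle1. Qed.

Lemma mul_dvd_cancel_l a b c : dvd (a ** b) (a ** c) -> dvd b c.
Proof. intros [x hx]; exists x; apply (mcancel a); now rewrite mmulA. Qed.

Lemma mul_dvd_cancel_r a b c : dvd (b ** a) (c ** a) -> dvd b c.
Proof. rewrite (mmulC b), (mmulC c); apply mul_dvd_cancel_l. Qed.

Lemma unit_dvd_1 u : unit u <-> dvd u mone.
Proof. split; intros [v h]; exists v; auto. Qed.

Lemma unit_dvd u x : unit u -> dvd u x.
Proof. intros h%unit_dvd_1; eapply dvd_trans; [exact h | apply dvd_1_l]. Qed.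

Lemma dvd_unit x u : dvd x u -> unit u -> unit x.
Proof. rewrite !unit_dvd_1; apply dvd_trans. Qed.

Lemma unit_one : unit (@mone H).
Proof. exists mone; apply mmul1. Qed.

Lemma unit_mul a b : unit a -> unit b -> unit (a ** b).
Proof. intros [x hx] [y hy]; exists (x ** y); rewrite mmul_shuffle1, hx, hy; apply mmul1. Qed.

Lemma unit_mul_l a b : unit (a ** b) -> unit a.
Proof. apply dvd_unit, dvd_factor_l. Qed.

Lemma unit_of_mul_dvd a b : dvd (a ** b) a -> unit b.
Proof.
  intros [x hx]; exists x; apply (mcancel a).
  now rewrite mmulA, <- hx, mmul_1_r.
Qed.

Lemma mul_unit_dvd u c : unit u -> dvd (u ** c) c.
Proof. intros [v hv]; exists v; now rewrite mmul_shuffle0, hv, mmul1. Qed.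

Lemma pw_1_r x : pw x 1 = x.
Proof. apply mmul1. Qed.

Lemma pw_2_r x : pw x 2 = x ** x.
Proof. simpl; now rewrite mmul1. Qed.

Lemma pw_add_r x m n : pw x (m + n) = pw x m ** pw x n.
Proof.
  induction n as [|n IH]; simpl; [now rewrite Nat.add_0_r, mmul_1_r|].
  now rewrite Nat.add_succ_r; simpl; rewrite IH, mmulA.
Qed.

Lemma pw_mul_l x y n : pw (x ** y) n = pw x n ** pw y n.
Proof.
  induction n as [|n IH]; simpl; [now rewrite mmul1|].
  rewrite IH; apply mmul_shuffle1.
Qed.

Lemma pw_mul_r x m n : pw x (m * n) = pw (pw x m) n.
Proof.
  induction n as [|n IH]; simpl; [now rewrite Nat.mul_0_r|].
  now rewrite Nat.mul_succ_r, pw_add_r, IH.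
Qed.

Lemma pw_1_l n : pw (@mone H) n = mone.
Proof. induction n as [|n IH]; simpl; auto; now rewrite IH, mmul1. Qed.

Lemma unit_pw x n : unit x -> unit (pw x n).
Proof. intro h; induction n; simpl; [apply unit_one | now apply unit_mul]. Qed.

Lemma pw_dvd_mono_l x y n : dvd x y -> dvd (pw x n) (pw y n).
Proof. intros [c ->]; rewrite pw_mul_l; apply dvd_factor_l. Qed.

Lemma pw_dvd_mono_r x m n : m <= n -> dvd (pw x m) (pw x n).
Proof. intro h; replace n with (m + (n - m)) by lia; rewrite pw_add_r; apply dvd_factor_l. Qed.

Lemma dvd_pw x n : 1 <= n -> dvd x (pw x n).
Proof. intro h; rewrite <- (pw_1_r x) at 1; now apply pw_dvd_mono_r. Qed.


Lemma prod1n_ext (s t : nat -> H) n :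
  (forall i, 1 <= i <= n -> s i = t i) -> prod1n s n = prod1n t n.
Proof.
  induction n as [|n IH]; intro h; simpl; auto.
  rewrite IH, h; auto; [lia | intros; apply h; lia].
Qed.

Lemma prod1n_mul (s t : nat -> H) n :
  prod1n (fun i => s i ** t i) n = prod1n s n ** prod1n t n.
Proof.
  induction n as [|n IH]; simpl; [now rewrite mmul1|].
  rewrite IH; apply mmul_shuffle1.
Qed.

Lemma prod1n_pw (s : nat -> H) k n :
  prod1n (fun i => pw (s i) k) n = pw (prod1n s n) k.
Proof.
  induction n as [|n IH]; simpl; [now rewrite pw_1_l|].
  now rewrite IH, pw_mul_l.
Qed.

Lemma prod1n_shift (s : nat -> H) n :
  prod1n s (S n) = s 1 ** prod1n (fun i => s (S i)) n.
Proof.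
  induction n as [|n IH]; [simpl; now rewrite mmul1, mmul_1_r|].
  change (prod1n s (S (S n))) with (prod1n s (S n) ** s (S (S n))).
  rewrite IH; simpl; now rewrite mmulA.
Qed.

Lemma prod1n_snoc (s : nat -> H) x n :
  prod1n (fun i => if i <=? n then s i else x) (S n) = prod1n s n ** x.
Proof.
  cbn [prod1n]; rewrite (proj2 (Nat.leb_gt (S n) n)) by lia; f_equal.
  apply prod1n_ext; intros i hi; now rewrite (proj2 (Nat.leb_le i n)) by lia.
Qed.

Lemma prod1n_dvd_mono (s t : nat -> H) n :
  (forall i, 1 <= i <= n -> dvd (s i) (t i)) -> dvd (prod1n s n) (prod1n t n).
Proof.
  induction n as [|n IH]; intro h; simpl; [apply dvd_refl|].
  apply mul_dvd_mono; [apply IH; intros; apply h | apply h]; lia.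
Qed.

Lemma dvd_prod1n (s : nat -> H) n i : 1 <= i <= n -> dvd (s i) (prod1n s n).
Proof.
  induction n as [|n IH]; intro h; simpl; [lia|].
  destruct (Nat.eq_dec i (S n)) as [->|ne]; [apply dvd_factor_r|].
  apply dvd_mul_l, IH; lia.
Qed.

Lemma mul_dvd_prod1n (s : nat -> H) n i j :
  1 <= i <= n -> 1 <= j <= n -> i <> j -> dvd (s i ** s j) (prod1n s n).
Proof.
  induction n as [|n IH]; intros hi hj ne; simpl; [lia|].
  destruct (Nat.eq_dec j (S n)) as [->|nej].
  - apply mul_dvd_mono; [apply dvd_prod1n; lia | apply dvd_refl].
  - destruct (Nat.eq_dec i (S n)) as [->|nei].
    + rewrite mmulC; apply mul_dvd_mono; [apply dvd_prod1n; lia | apply dvd_refl].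
    + apply dvd_mul_l, IH; lia.
Qed.

Lemma Gpr_dvd x r : Gpr r -> dvd x r -> Gpr x.
Proof.
  intros hr [y ->] b n hn hx.
  apply (mul_dvd_cancel_r y), (hr _ n hn).
  rewrite pw_mul_l; apply mul_dvd_mono; [exact hx | now apply dvd_pw].
Qed.

Lemma Gpr_unit u : unit u -> Gpr u.
Proof. intros h b n _ _; now apply unit_dvd. Qed.

Lemma Gpr_unit_mul u r : unit u -> Gpr r -> Gpr (u ** r).
Proof. intros hu hr; apply (Gpr_dvd _ r hr), mul_unit_dvd, hu. Qed.

(* From [d^2 | r] we get [r | (r/d)^2], hence [r | r/d]. *)
Lemma Gpr_sq_dvd_unit r d : Gpr r -> dvd (d ** d) r -> unit d.
Proof.
  intros hr [c hc].
  assert (h : dvd r (d ** c)).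
  { apply (hr _ 2); auto; exists c; rewrite pw_2_r, hc, !mmulA; f_equal; apply mmul_shuffle0. }
  rewrite hc, <- mmulA, mmulC in h.
  exact (unit_of_mul_dvd _ _ h).
Qed.

Lemma Gpr_Sqf r : Gpr r -> Sqf r.
Proof.
  intros hr [b [c [hb e]]]; apply hb, (Gpr_sq_dvd_unit r); auto.
  rewrite e, pw_2_r; apply dvd_factor_l.
Qed.

Lemma Sqf_unit u : unit u -> Sqf u.
Proof.
  intros hu [b [c [hb e]]]; apply hb; rewrite e, pw_2_r in hu.
  now apply unit_mul_l, unit_mul_l in hu.
Qed.

Definition pdvd x y : Prop := dvd x y /\ ~ dvd y x.

Lemma pdvd_mul_l b c : ~ unit c -> pdvd b (b ** c).
Proof. intro hc; split; [apply dvd_factor_l | intros h%unit_of_mul_dvd; auto]. Qed.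

Lemma pdvd_sq b c : ~ unit b -> pdvd b (pw b 2 ** c).
Proof.
  intro hb; rewrite pw_2_r, <- mmulA; apply pdvd_mul_l.
  now intros h%unit_mul_l.
Qed.

Lemma wf_pdvd : ACCP H -> well_founded pdvd.
Proof.
  intros hacc y0; apply NNPP; intro hy0.
  (* Dependent choice: every non-accessible element has a non-accessible proper divisor. *)
  assert (step : forall y : {y | ~ Acc pdvd y},
             {x : {y | ~ Acc pdvd y} | pdvd (proj1_sig x) (proj1_sig y)}).
  { intros [y hy]; apply constructive_indefinite_description.
    apply NNPP; intro hc; apply hy; constructor; intros x hx.
    apply NNPP; intro hax; apply hc; now exists (exist _ x hax). }
  pose (next z := proj1_sig (step z)).
  pose (f n := proj1_sig (Nat.iter n next (exist _ y0 hy0))).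
  destruct (hacc f) as [N HN].
  - intro n; exact (proj1 (proj2_sig (step _))).
  - apply (proj2 (proj2_sig (step (Nat.iter N next (exist _ y0 hy0))))).
    apply (HN (S N)); lia.
Qed.


(* Peeling [s (n+2) = s (n+1) ** t] off the chain adds [t] as a new layer of
   multiplicity one and raises every older layer's multiplicity by one. *)
Lemma chain_layers (s : nat -> H) n :
  (forall i, 1 <= i < S n -> dvd (s i) (s (S i))) ->
  exists u : nat -> H, prod1n s (S n) = prod1n (fun i => pw (u i) i) (S n) /\
            prod1n u (S n) = s (S n).
Proof.
  induction n as [|n IH]; intro hchain.
  - exists (fun _ => s 1); simpl; now rewrite !mmul1.
  - destruct IH as [u [e1 e2]]; [intros; apply hchain; lia|].
    destruct (hchain (S n)) as [t ht]; [lia|].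
    pose (v i := match i with S (S k) => u (S k) | _ => t end).
    exists v; rewrite (prod1n_shift (fun i => pw (v i) i)), (prod1n_shift v); split.
    + rewrite pw_1_r, (prod1n_ext (fun i => pw (v (S i)) (S i)) (fun i => pw (u i) i ** u i))
        by (intros [|i] hi; [lia | reflexivity]).
      rewrite prod1n_mul, <- e1, e2.
      change (prod1n s (S (S n))) with (prod1n s (S n) ** s (S (S n))).
      rewrite ht, mmulA; apply mmulC.
    + rewrite (prod1n_ext (fun i => v (S i)) u) by (intros [|i] hi; [lia | reflexivity]).
      rewrite e2, ht; apply mmulC.
Qed.

Lemma cond2_layers (P : H -> Prop) a : cond2 H P a ->
  exists n (u : nat -> H), 1 <= n /\ a = prod1n (fun i => pw (u i) i) n /\ P (prod1n u n).
Proof.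
  intros [[|n] [s [hn [hP [hchain ->]]]]]; [lia|].
  destruct (chain_layers s n hchain) as [u [e1 e2]].
  exists (S n), u; repeat split; [lia | exact e1 | rewrite e2; apply hP; lia].
Qed.

(* Write each exponent as [i = 2 (i/2) + i mod 2]. *)
Lemma prod1n_pw_sq_split (u : nat -> H) n :
  exists e f, prod1n (fun i => pw (u i) i) n = pw e 2 ** f /\ dvd f (prod1n u n).
Proof.
  induction n as [|n IH].
  - exists mone, mone; simpl; split; [now rewrite !mmul1 | apply dvd_refl].
  - destruct IH as [e [f [e1 e2]]]; cbn [prod1n]; rewrite e1.
    set (x := u (S n)); set (k := S n).
    exists (e ** pw x (k / 2)), (f ** pw x (k mod 2)); split.
    + rewrite (Nat.div_mod_eq k 2) at 1.
      rewrite pw_add_r, (Nat.mul_comm 2), pw_mul_r, pw_mul_l; apply mmul_shuffle1.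
    + apply mul_dvd_mono; [exact e2|].
      rewrite <- (pw_1_r x) at 2; apply pw_dvd_mono_r.
      pose proof (Nat.mod_upper_bound k 2); lia.
Qed.

Lemma prod1n_pw_pow2 (s : nat -> H) n :
  prod1n (fun i => pw (s i) (2 ^ i)) n = pw (prod1n (fun i => pw (s i) (2 ^ (i - 1))) n) 2.
Proof.
  rewrite <- prod1n_pw; apply prod1n_ext; intros [|i] hi; [lia|].
  rewrite <- pw_mul_r, Nat.pow_succ_r', Nat.mul_comm; do 3 f_equal; lia.
Qed.

Inductive prods (P : H -> Prop) : H -> Prop :=
  | prods_one : prods P mone
  | prods_snoc a x : prods P a -> P x -> prods P (a ** x).

Lemma prods_mul (P : H -> Prop) a b : prods P a -> prods P b -> prods P (a ** b).
Proof.
  intros ha hb; induction hb as [|b x hb IH hx]; [now rewrite mmul_1_r|].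
  rewrite mmulA; now constructor.
Qed.

Lemma prods_pw (P : H -> Prop) x k : P x -> prods P (pw x k).
Proof. intro hx; induction k; simpl; now constructor. Qed.

Lemma prods_prod1n (P : H -> Prop) (s : nat -> H) n :
  (forall i, 1 <= i <= n -> prods P (s i)) -> prods P (prod1n s n).
Proof.
  induction n as [|n IH]; intro h; simpl; [constructor|].
  apply prods_mul; [apply IH; intros; apply h | apply h]; lia.
Qed.

Lemma cond0_of_prods (P : H -> Prop) a : P mone -> prods P a -> cond0 H P a.
Proof.
  intros h1 ha; induction ha as [|a x ha [n [s [hn [hP ->]]]] hx].
  - exists 1, (fun _ => mone); repeat split; auto; simpl; now rewrite mmul1.
  - exists (S n), (fun i => if i <=? n then s i else x); rewrite prod1n_snoc.
    repeat split; [lia | intros i hi; destruct (Nat.leb_spec i n); auto; apply hP; lia].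
Qed.

Lemma cond2_single (P : H -> Prop) x : P x -> cond2 H P x.
Proof. intro h; exists 1, (fun _ => x); repeat split; auto; [lia | simpl; now rewrite mmul1]. Qed.

Lemma cond2_snoc (P : H -> Prop) b c :
  cond2 H P b -> P c -> (forall d, P d -> dvd d b -> dvd d c) -> cond2 H P (b ** c).
Proof.
  intros [n [s [hn [hP [hchain ->]]]]] hc hdvd.
  exists (S n), (fun i => if i <=? n then s i else c); rewrite prod1n_snoc.
  repeat split; [lia | |].
  - intros i hi; destruct (Nat.leb_spec i n); auto; apply hP; lia.
  - intros i hi; destruct (Nat.leb_spec i n), (Nat.leb_spec (S i) n); try lia.
    + apply hchain; lia.
    + replace i with n by lia; apply hdvd; [apply hP; lia | apply dvd_prod1n; lia].
Qed.


Lemma prod1n_const x n : prod1n (fun _ => x) n = pw x n.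
Proof. induction n as [|n IH]; simpl; congruence. Qed.

Lemma chain_dvd_last (s : nat -> H) n :
  (forall i, 1 <= i < n -> dvd (s i) (s (S i))) -> forall i, 1 <= i <= n -> dvd (s i) (s n).
Proof.
  induction n as [|n IH]; intros hchain i hi; [lia|].
  destruct (Nat.eq_dec i (S n)) as [->|ne]; [apply dvd_refl|].
  apply (dvd_trans _ (s n)); [apply IH; intros; try apply hchain; lia | apply hchain; lia].
Qed.

Lemma cond1_cond0 (P : H -> Prop) a : P mone -> cond1 H P a -> cond0 H P a.
Proof.
  intros h1 [n [s [_ [hP [_ ->]]]]]; apply cond0_of_prods; auto.
  apply prods_prod1n; intros i hi; now apply prods_pw, hP.
Qed.

Lemma cond2_cond1_Gpr a : cond2 H Gpr a -> cond1 H Gpr a.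
Proof.
  intro h; destruct (cond2_layers _ _ h) as [n [u [hn [-> hg]]]].
  exists n, u; repeat split; auto.
  - intros i hi; apply (Gpr_dvd _ _ hg), dvd_prod1n, hi.
  - intros i j hi hj ne d di dj; apply (Gpr_sq_dvd_unit _ _ hg).
    apply (dvd_trans _ (u i ** u j)); [now apply mul_dvd_mono | now apply mul_dvd_prod1n].
Qed.

Lemma cond2_cond6_Gpr a : cond2 H Gpr a -> cond6 H Gpr a.
Proof.
  intro h; destruct (cond2_layers _ _ h) as [n [u [hn [-> hg]]]].
  destruct (prod1n_pw_sq_split u n) as [b [c [-> hc]]].
  exists b, c; split; [exact (Gpr_dvd _ _ hg hc) | reflexivity].
Qed.

Lemma cond2_cond5 (P : H -> Prop) a : cond2 H P a -> cond5 H P a.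
Proof.
  intros [[|n] [s [hn [hP [hchain ->]]]]]; [lia|].
  exists (prod1n s n), (s (S n)); repeat split; [apply hP; lia|].
  exists (S n); split; [lia|].
  rewrite <- prod1n_const; apply prod1n_dvd_mono, chain_dvd_last, hchain.
Qed.

Lemma cond3_cond6 (P : H -> Prop) a : cond3 H P a -> cond6 H P a.
Proof.
  intros [n [s [hP ->]]].
  exists (prod1n (fun i => pw (s i) (2 ^ (i - 1))) n), (s 0); split; [apply hP; lia|].
  rewrite prod1n_pw_pow2; apply mmulC.
Qed.

Lemma cond5_cond5'_Gpr a : cond5 H Gpr a -> cond5' H Gpr a.
Proof.
  intros [b [c [hc [e [n [hn ha]]]]]]; exists b, c; repeat split; auto.
  intros d hd da; apply (hd c n hn), (dvd_trans _ _ _ da ha).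
Qed.

Lemma cond4_cond4'_Gpr a : cond4 H Gpr a -> cond4' H Gpr a.
Proof.
  intros [b [c [hc [hbc [e [d [hd [hd2 [n [hn hb]]]]]]]]]]; exists b, c; repeat split; auto.
  intros x hx xb; apply (dvd_trans _ (pw d 2)); [|exact hd2].
  apply pw_dvd_mono_l, (hx d n hn), (dvd_trans _ _ _ xb hb).
Qed.

Section Monotone.
Variables P Q : H -> Prop.
Hypothesis hPQ : forall x, P x -> Q x.

Lemma cond1_mono a : cond1 H P a -> cond1 H Q a.
Proof. intros [n [s [h1 [h2 h3]]]]; exists n, s; auto. Qed.

Lemma cond2_mono a : cond2 H P a -> cond2 H Q a.
Proof. intros [n [s [h1 [h2 h3]]]]; exists n, s; auto. Qed.

Lemma cond4_mono a : cond4 H P a -> cond4 H Q a.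
Proof. intros [b [c [h1 [h2 [h3 [d [h4 h5]]]]]]]; exists b, c; repeat split; auto; now exists d; auto. Qed.

Lemma cond5_mono a : cond5 H P a -> cond5 H Q a.
Proof. intros [b [c [h1 h2]]]; exists b, c; auto. Qed.

End Monotone.

Section ACCP.
Hypothesis hacc : ACCP H.

Lemma cond2_of_split (P : H -> Prop) :
  (forall u, unit u -> P u) ->
  (forall a, ~ unit a -> exists b c, P c /\ ~ unit c /\ a = b ** c /\
                                     forall d, P d -> dvd d b -> dvd d c) ->
  forall a, cond2 H P a.
Proof.
  intros hunit hsplit a; induction a as [a IH] using (well_founded_ind (wf_pdvd hacc)).
  destruct (classic (unit a)) as [ua|nua]; [now apply cond2_single, hunit|].
  destruct (hsplit a nua) as [b [c [hc [nuc [-> hdvd]]]]].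
  apply cond2_snoc; auto; now apply IH, pdvd_mul_l.
Qed.

Lemma cond5_cond2_Gpr : holds H cond5 Gpr -> holds H cond2 Gpr.
Proof.
  intro h5; red; apply cond2_of_split; [exact Gpr_unit|].
  intros a nua; destruct (h5 a) as [b [c [hc [ea [m [hm ha]]]]]].
  exists b, c; repeat split; auto.
  - intro uc; apply nua, (dvd_unit _ _ ha), unit_pw, uc.
  - intros d hd db; apply (hd c m hm), (dvd_trans _ a); [rewrite ea; now apply dvd_mul_l | exact ha].
Qed.

Lemma nonunit_Sqf_dvd x : ~ unit x -> exists d, Sqf d /\ ~ unit d /\ dvd d x.
Proof.
  induction x as [x IH] using (well_founded_ind (wf_pdvd hacc)); intro nux.
  destruct (classic (Sqf x)) as [sx|[b [c [nub ->]]]%NNPP].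
  - exists x; repeat split; auto; apply dvd_refl.
  - destruct (IH b (pdvd_sq b c nub) nub) as [d [hd [nud db]]].
    exists d; repeat split; auto; apply (dvd_trans _ b); [exact db | apply pdvd_sq, nub].
Qed.

Lemma cond5'_cond2_Sqf : holds H cond5' Sqf -> holds H cond2 Sqf.
Proof.
  intro h5; red; apply cond2_of_split; [exact Sqf_unit|].
  intros a nua; destruct (h5 a) as [b [c [hc [-> hdvd]]]].
  exists b, c; repeat split; auto.
  - intro uc; destruct (nonunit_Sqf_dvd _ nua) as [d [hd [nud da]]].
    apply nud, (dvd_unit _ _ (hdvd d hd da) uc).
  - intros d hd db; apply hdvd; auto; now apply dvd_mul_l.
Qed.

Lemma cond6_cond3_Gpr : holds H cond6 Gpr -> holds H cond3 Gpr.
Proof.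
  intros h6 a; induction a as [a IH] using (well_founded_ind (wf_pdvd hacc)).
  destruct (h6 a) as [b [c [hc ->]]].
  destruct (classic (unit b)) as [ub|nub].
  - exists 0, (fun _ => pw b 2 ** c); split; [intros; apply Gpr_unit_mul; [apply unit_pw, ub | exact hc]|].
    simpl; now rewrite mmul_1_r.
  - destruct (IH b (pdvd_sq b c nub)) as [n [s [hs ->]]].
    exists (S n), (fun i => match i with 0 => c | S k => s k end); split.
    + intros [|i] hi; auto; apply hs; lia.
    + rewrite mmulC, (prod1n_pw_pow2 _ (S n)), prod1n_shift; do 3 f_equal.
      * symmetry; apply pw_1_r.
      * apply prod1n_ext; intros i hi; do 2 f_equal; lia.
Qed.

(* Call such an [r] a radical of [x].  For [x = b^2 c] with a radical [g] of [b],
   [g c] is again a proper divisor of [x], so the induction hypothesis also gives a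
   radical of [g c], which is one of [x]. *)
Lemma cond6_Gpr_radical : holds H cond6 Gpr ->
  forall x, exists r, Gpr r /\ dvd r x /\ exists n, 1 <= n /\ dvd x (pw r n).
Proof.
  intros h6 x; induction x as [x IH] using (well_founded_ind (wf_pdvd hacc)).
  destruct (h6 x) as [b [c [hc ->]]].
  destruct (classic (unit b)) as [ub|nub].
  - exists (pw b 2 ** c); split; [apply Gpr_unit_mul; [apply unit_pw, ub | exact hc]|].
    split; [apply dvd_refl | exists 1; split; [lia | rewrite pw_1_r; apply dvd_refl]].
  - destruct (IH b (pdvd_sq b c nub)) as [g [hg [gb [m [hm bg]]]]].
    assert (gc_x : dvd (g ** c) (pw b 2 ** c)).
    { rewrite pw_2_r; apply mul_dvd_mono; [now apply dvd_mul_l | apply dvd_refl]. }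
    assert (x_gc : ~ dvd (pw b 2 ** c) (g ** c)).
    { intro h; apply nub, (unit_of_mul_dvd (b ** c)).
      rewrite <- mmul_shuffle0, <- pw_2_r; apply (dvd_trans _ _ _ h).
      apply mul_dvd_mono; [exact gb | apply dvd_refl]. }
    destruct (IH _ (conj gc_x x_gc)) as [r [hr [rgc [k [hk gcr]]]]].
    exists r; split; [exact hr|]; split; [exact (dvd_trans _ _ _ rgc gc_x)|].
    exists (k * (m + m)); split; [lia|].
    rewrite pw_mul_r; apply (dvd_trans _ (pw (g ** c) (m + m))); [|now apply pw_dvd_mono_l].
    rewrite pw_mul_l, pw_add_r, pw_2_r; apply mul_dvd_mono.
    + now apply mul_dvd_mono.
    + apply dvd_pw; lia.
Qed.

Lemma cond6_cond5_Gpr : holds H cond6 Gpr -> holds H cond5 Gpr.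
Proof.
  intros h6 a; destruct (cond6_Gpr_radical h6 a) as [c [hc [[b ->] hn]]].
  exists b, c; repeat split; auto; apply mmulC.
Qed.

(* From the layers [a = u_1 u_2^2 ... u_n^n] take [c = u_1], [b = u_2^2 ... u_n^n]
   and [d = u_2 ... u_n], so that [d^2 | b | d^n]. *)
Lemma cond5_cond4_Gpr : holds H cond5 Gpr -> holds H cond4 Gpr.
Proof.
  intros h5 a.
  destruct (cond2_layers _ _ (cond5_cond2_Gpr h5 a)) as [[|n] [u [hn [-> hg]]]]; [lia|].
  rewrite !prod1n_shift, pw_1_r in *.
  set (d := prod1n (fun i => u (S i)) n) in *.
  set (b := prod1n (fun i => pw (u (S i)) (S i)) n).
  assert (hdb : dvd (pw d 2) b).
  { unfold b, d; rewrite <- prod1n_pw.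
    apply prod1n_dvd_mono; intros; apply pw_dvd_mono_r; lia. }
  assert (hbd : dvd b (pw d (S n))).
  { unfold b, d; rewrite <- prod1n_pw.
    apply prod1n_dvd_mono; intros; apply pw_dvd_mono_r; lia. }
  exists b, (u 1); split; [exact (Gpr_dvd _ _ hg (dvd_factor_l _ _))|].
  split; [|split; [apply mmulC|]].
  - intros x xb xc.
    assert (gx : Gpr x) by exact (Gpr_dvd _ _ (Gpr_dvd _ _ hg (dvd_factor_l _ _)) xc).
    apply (Gpr_sq_dvd_unit _ _ hg), mul_dvd_mono; [exact xc|].
    apply (gx d (S n)); [lia | exact (dvd_trans _ _ _ xb hbd)].
  - exists d; split; [exact (Gpr_dvd _ _ hg (dvd_factor_r _ _))|].
    split; [exact hdb | exists (S n); split; [lia | exact hbd]].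
Qed.

End ACCP.

End Monoid.

Theorem proposition4p6 (H : CCMonoid) (hacc : ACCP H) :
  let R := @Gpr H in
  let Q := @Sqf H in
  (holds H cond1 R -> holds H cond0 R) /\
  (holds H cond2 R -> holds H cond1 R) /\
  (holds H cond2 R <-> holds H cond3 R) /\
  (holds H cond3 R <-> holds H cond6 R) /\
  (holds H cond6 R <-> holds H cond5 R) /\
  (holds H cond5 R -> holds H cond4 R) /\
  (holds H cond5 R -> holds H cond5' R) /\
  (holds H cond4 R -> holds H cond4' R) /\
  (holds H cond1 R -> holds H cond1 Q) /\
  (holds H cond2 R -> holds H cond2 Q) /\
  (holds H cond5 R -> holds H cond5 Q) /\
  (holds H cond4 R -> holds H cond4 Q) /\
  (holds H cond2 Q -> holds H cond5 Q) /\
  (holds H cond5' Q -> holds H cond2 Q).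
Proof.
  intros R Q; unfold R, Q.
  pose proof (cond5_cond2_Gpr hacc) as h52.
  pose proof (cond6_cond3_Gpr hacc) as h63.
  pose proof (cond6_cond5_Gpr hacc) as h65.
  assert (h26 : holds H cond2 Gpr -> holds H cond6 Gpr) by (intros h a; apply cond2_cond6_Gpr, h).
  assert (h36 : holds H cond3 Gpr -> holds H cond6 Gpr) by (intros h a; apply cond3_cond6, h).
  unfold holds in *; repeat split; intros h a.
  - exact (cond1_cond0 _ a (Gpr_unit _ unit_one) (h a)).
  - exact (cond2_cond1_Gpr a (h a)).
  - exact (h63 (h26 h) a).
  - exact (h52 (h65 (h36 h)) a).
  - exact (h36 h a).
  - exact (h63 h a).
  - exact (h65 h a).
  - exact (h26 (h52 h) a).
  - exact (cond5_cond4_Gpr hacc h a).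
  - exact (cond5_cond5'_Gpr a (h a)).
  - exact (cond4_cond4'_Gpr a (h a)).
  - exact (cond1_mono _ _ Gpr_Sqf a (h a)).
  - exact (cond2_mono _ _ Gpr_Sqf a (h a)).
  - exact (cond5_mono _ _ Gpr_Sqf a (h a)).
  - exact (cond4_mono _ _ Gpr_Sqf a (h a)).
  - exact (cond2_cond5 _ a (h a)).
  - exact (cond5'_cond2_Sqf hacc h a).
Qed.
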